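(* For any $p\in\mathbb{P}^1\setminus\{\infty\}$ there is a sequence $(g_n)_{n}$ in $H(\mathbb{Z})$ such that $g_n q$ converges to $\infty$ uniformly for $q$ in compact subsets of $\mathbb{P}^1\setminus\{p\}$.
   Context: Let $\mathbb{P}^1=\mathbb{P}^1(\mathbb{R})$ with its usual topology (a circle) and the natural action of $\mathrm{PSL}_2(\mathbb{R})$. Let $G$ be the group of homeomorphisms of $\mathbb{P}^1$ which are piecewise in $\mathrm{PSL}_2(\mathbb{R})$ with finitely many pieces, each an interval. Let $\infty\in\mathbb{P}^1$ correspond to the first basis vector of $\mathbb{R}^2$ and $H<G$ its stabilizer. Let $P_{\mathbb{Z}}$ be the set of fixed points of hyperbolic elements (trace of absolute value $>2$) of $\mathrm{PSL}_2(\mathbb{Z})$, $G(\mathbb{Z})$ the subgroup of $G$ of elements piecewise in $\mathrm{PSL}_2(\mathbb{Z})$ with all interval endpoints in $P_{\mathbb{Z}}$, and $H(\mathbb{Z})=G(\mathbb{Z})\cap H$. *)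

From HB Require Import structures.
From mathcomp Require Import all_boot all_order all_algebra.
From mathcomp Require Import boolp classical_sets reals.
Set Implicit Arguments. Unset Strict Implicit. Unset Printing Implicit Defensive.
Import Order.TTheory GRing.Theory Num.Theory.
Local Open Scope classical_set_scope.
Local Open Scope ring_scope.

(* The projective line P^1(R) in the affine chart: [Some x] is the line of
   (x,1), and [None] is infinity, the line of the first basis vector (1,0). *)
Definition P1 (R : realType) := option R.
Definition infty {R : realType} : P1 R := None.

Definition p1_open (R : realType) (U : set (P1 R)) : Prop :=
  (forall x : R, U (Some x) ->
     exists2 e : R, 0 < e & forall y : R, `|y - x| < e -> U (Some y)) /\
  (U None -> exists M : R, forall y : R, M < `|y| -> U (Some y)).

Definition p1_compact (R : realType) (K : set (P1 R)) : Prop :=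
  forall (I : Type) (V : I -> set (P1 R)),
    (forall i, p1_open (V i)) -> K `<=` \bigcup_(i in setT) V i ->
    exists (n : nat) (F : 'I_n -> I), forall x, K x -> exists j, V (F j) x.

Definition p1_continuous (R : realType) (f : P1 R -> P1 R) : Prop :=
  forall U, p1_open U -> p1_open (f @^-1` U).

Definition p1_homeo (R : realType) (f : P1 R -> P1 R) : Prop :=
  exists g : P1 R -> P1 R,
    [/\ cancel f g, cancel g f, p1_continuous f & p1_continuous g].

(* Integer 2x2 matrices (a, b, c, d) = [[a, b], [c, d]]; SL_2(Z) elements
   represent PSL_2(Z) (M and -M act identically). *)
Definition mat2 := (int * int * int * int)%type.
Definition in_SL2Z (M : mat2) : Prop :=
  let: (a, b, c, d) := M in a * d - b * c = 1.

(* Projective (Moebius) action of M on P^1: [x:y] |-> [ax+by : cx+dy]. *)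
Definition mob (R : realType) (M : mat2) (x : P1 R) : P1 R :=
  let: (a, b, c, d) := M in
  match x with
  | Some t => if c%:~R * t + d%:~R == 0 then None
              else Some ((a%:~R * t + b%:~R) / (c%:~R * t + d%:~R))
  | None => if c == 0 then None else Some (a%:~R / c%:~R)
  end.

Definition hyperbolic (M : mat2) : Prop :=
  let: (a, b, c, d) := M in (2 < `|a + d|)%R.

Definition PZ (R : realType) : set (P1 R) :=
  [set x | exists M : mat2, [/\ in_SL2Z M, hyperbolic M & mob M x = x]].

(* Cyclic order on the circle P^1 = R u {oo}: the linear order on R with oo
   put last, and strict cyclic betweenness. *)
Definition p1lt (R : realType) (x y : P1 R) : bool :=
  match x, y with
  | Some a, Some b => a < b
  | Some _, None => true
  | None, _ => false
  end.

Definition cbetween (R : realType) (a x b : P1 R) : bool :=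
  [|| p1lt a x && p1lt x b, p1lt b a && p1lt a x | p1lt x b && p1lt b a].

(* Closed arc of the circle from a to b (counterclockwise); arc a a = {a}. *)
Definition arc (R : realType) (a b : P1 R) : set (P1 R) :=
  [set x | x = a \/ x = b \/ cbetween a x b].

Definition piecewise_PSL2Z (R : realType) (f : P1 R -> P1 R) : Prop :=
  exists s : seq (P1 R * P1 R * mat2),
    (forall pc, pc \in s ->
       [/\ PZ pc.1.1, PZ pc.1.2, in_SL2Z pc.2 &
           forall x, arc pc.1.1 pc.1.2 x -> f x = mob pc.2 x]) /\
    (forall x : P1 R, exists2 pc, pc \in s & arc pc.1.1 pc.1.2 x).

Definition in_GZ (R : realType) (f : P1 R -> P1 R) : Prop :=
  p1_homeo f /\ piecewise_PSL2Z f.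

Definition in_HZ (R : realType) (f : P1 R -> P1 R) : Prop :=
  in_GZ f /\ f infty = infty.

Definition unif_to_infty_away (R : realType) (p : P1 R)
    (g : nat -> P1 R -> P1 R) : Prop :=
  forall K : set (P1 R), p1_compact K -> ~ K p ->
  forall U : set (P1 R), p1_open U -> U infty ->
  exists N : nat, forall n, (N <= n)%N -> forall q, K q -> U (g n q).

From Pilot Require Import Defs.
From mathcomp Require Import all_boot all_order all_algebra.
From mathcomp Require Import boolp classical_sets reals.
From mathcomp Require Import ring lra zify.
Set Implicit Arguments. Unset Strict Implicit. Unset Printing Implicit Defensive.
Import Order.TTheory GRing.Theory Num.Theory.
Local Open Scope classical_set_scope.
Local Open Scope ring_scope.

(* Fix p and m, and let N = m + 3, J = floor (N p) and d = 1/(m+1). Every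
   [Kmat J N t] lies in SL_2(Z) and has its pole at (J + 1/N)/N, within 1/N of p.
   For large t > 0 its fixed points a < c lie left of the pole with
   a < p - d <= c, and it maps [a, c] increasingly onto itself, sending p - d
   below -m. For large t < 0 its fixed points c' < b lie right of the pole with
   c' <= p + d < b, and it sends p + d above m. These matrices are hyperbolic, so
   a, c, c', b lie in P_Z, and gluing the two pieces with the identity gives an
   increasing element of H(Z) that maps every point at distance at least d from
   p outside [-m, m]. A compact set avoiding p stays at positive distance from
   p, so these maps converge to infinity uniformly on it as m grows. *)

Section P1Topology.
Variable R : realType.
Implicit Types (x y : R) (f g : R -> R).

Lemma omap_p1_continuous f g :
  {homo f : x y / x < y} -> cancel g f -> p1_continuous (omap f).
Proof.
move=> incf gK U [Ufin Uinf]; have mono_f := leW_mono (le_mono incf); split.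
- move=> x /= Ux; have [e e0 He] := Ufin _ Ux.
  have fl : f (g (f x - e / 2)) = f x - e / 2 by rewrite gK.
  have fr : f (g (f x + e / 2)) = f x + e / 2 by rewrite gK.
  have lx : g (f x - e / 2) < x by rewrite -mono_f fl; lra.
  have xr : x < g (f x + e / 2) by rewrite -mono_f fr; lra.
  exists (Num.min (x - g (f x - e / 2)) (g (f x + e / 2) - x)).
    by rewrite lt_min; apply/andP; split; lra.
  move=> y; rewrite lt_min !ltr_norml => /andP[/andP[? ?] /andP[? ?]].
  apply: He; rewrite ltr_norml.
  have : f (g (f x - e / 2)) < f y by apply: incf; lra.
  have : f y < f (g (f x + e / 2)) by apply: incf; lra.
  rewrite fl fr => ? ?; apply/andP; split; lra.
- move=> /= Uoo; have [M HM] := Uinf Uoo.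
  have M1 := ler_norm M; have M2 : - M <= `|M| by rewrite -normrN ler_norm.
  set l := g (- (`|M| + 1)); set r := g (`|M| + 1).
  have fl : f l = - (`|M| + 1) by rewrite /l gK.
  have fr : f r = `|M| + 1 by rewrite /r gK.
  have l1 := ler_norm l; have l2 : - l <= `|l| by rewrite -normrN ler_norm.
  have r1 := ler_norm r; have r2 := normr_ge0 r.
  exists (`|l| + `|r|) => y hy /=; apply: HM.
  have [yl|ly] := ltP y l.
    have := incf _ _ yl; rewrite fl => fy.
    have : - f y <= `|f y| by rewrite -normrN ler_norm.
    lra.
  have [yr|ry] := ltP r y.
    have := incf _ _ yr; rewrite fr => fy.
    have := ler_norm (f y); lra.
  have y1 := ler_norm y; have y2 : - y <= `|y| by rewrite -normrN ler_norm.
  have : `|y| <= `|l| + `|r|.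
    by case: (lerP 0 y) => y0; [rewrite ger0_norm | rewrite ltr0_norm]; lra.
  lra.
Qed.

Lemma omap_p1_homeo f g : {homo f : x y / x < y} -> cancel f g -> cancel g f ->
  p1_homeo (omap f).
Proof.
move=> incf fK gK; have incg : {homo g : x y / x < y}.
  by move=> x y xy; rewrite -(leW_mono (le_mono incf)) !gK.
exists (omap g); split; [exact: omapK | exact: omapK |
  exact: omap_p1_continuous gK | exact: omap_p1_continuous incg fK].
Qed.

Lemma p1_compact_dist_gt0 (K : set (P1 R)) p :
  p1_compact K -> ~ K (Some p) ->
  exists2 e, 0 < e & forall y, K (Some y) -> e <= `|y - p|.
Proof.
move=> cK Kp.
pose V (k : nat) : set (P1 R) :=
  fun q => if q is Some y then (k.+1%:R)^-1 < `|y - p| else True.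
have V_open k : p1_open (V k).
  have : (k.+1%:R)^-1 <= (1 : R) by rewrite invf_le1 ?ltr0Sn // ler1n.
  rewrite /V; move: (k.+1%:R)^-1 => r r1; split.
  - move=> x /= hx; exists (`|x - p| - r); first lra.
    move=> y hy /=; have := ler_distD y x p; rewrite distrC in hy; lra.
  - by move=> _; exists (`|p| + 1) => y hy /=; have := lerB_dist y p; lra.
have cover : K `<=` \bigcup_(i in setT) V i.
  case=> [y|] Ky; last by exists 0%N.
  have yp : 0 < `|y - p|.
    by rewrite normr_gt0 subr_eq0; apply: contraPneq Kp => <-.
  have yp' : 0 <= `|y - p|^-1 by rewrite invr_ge0 ltW.
  exists (Num.Def.archi_bound (`|y - p|^-1)) => //=.
  have := archi_boundP yp'; set k := Num.Def.archi_bound _ => hk.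
  rewrite -(invrK `|y - p|) ltf_pV2 ?posrE ?ltr0Sn ?invr_gt0 //.
  by apply: lt_le_trans hk _; rewrite ler_nat.
have [n [F HF]] := cK nat V V_open cover.
exists ((\max_(j < n) F j).+1%:R^-1); first by rewrite invr_gt0 ltr0Sn.
move=> y /HF[j Vj]; apply/ltW/(le_lt_trans _ Vj).
by rewrite lef_pV2 ?posrE ?ltr0Sn // ler_nat ltnS; apply: leq_bigmax.
Qed.
End P1Topology.

Section Patching.
Variable R : realType.
Implicit Types (a c x y : R) (f g h k : R -> R).

Definition patch a c h f x := if a <= x <= c then h x else f x.

Definition incr_piece a c h k :=
  [/\ h a = a, h c = c,
      (forall x y, a <= x -> x < y -> y <= c -> h x < h y) &
      forall x, a <= x <= c -> k (h x) = x].

Lemma incr_piece_le a c h k x y :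
  incr_piece a c h k -> a <= x -> x <= y -> y <= c -> h x <= h y.
Proof.
case=> _ _ hh _ ax; rewrite le_eqVlt => /orP[/eqP<- //|xy] yc.
exact/ltW/hh.
Qed.

Lemma incr_piece_mem a c h k x :
  incr_piece a c h k -> a <= x <= c -> a <= h x <= c.
Proof.
move=> H /andP[ax xc]; have [ha hc _ _] := H.
apply/andP; split; [rewrite -{1}ha | rewrite -hc];
  by apply: (incr_piece_le H) => //; apply: le_trans xc.
Qed.

Lemma patch_in a c h f x : a <= x <= c -> patch a c h f x = h x.
Proof. by rewrite /patch => ->. Qed.

Lemma patch_out a c h f x :
  h a = f a -> h c = f c -> x <= a \/ c <= x -> patch a c h f x = f x.
Proof.
rewrite /patch => ea ec hx; case: ifP => // /andP[ax xc].
have [xa|cx] := hx.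
  by have -> : x = a by apply/eqP; rewrite eq_le xa ax.
by have -> : x = c by apply/eqP; rewrite eq_le xc cx.
Qed.

Section Homeo.
Variables (a c : R) (h k f g : R -> R).
Hypothesis piece : incr_piece a c h k.
Hypotheses (incf : {homo f : x y / x < y}) (fa : f a = a) (fc : f c = c).

Lemma patch_homo : {homo patch a c h f : x y / x < y}.
Proof.
have [ha hc hh _] := piece; rewrite /patch => x y xy.
have [/andP[ax xc]|/negP xout] := boolP (a <= x <= c);
  have [/andP[ay yc]|/negP yout] := boolP (a <= y <= c).
- exact: hh.
- have cy : c < y.
    by rewrite ltNge; apply/negP => yc; apply: yout; rewrite yc (le_trans ax (ltW xy)).
  apply: (le_lt_trans _ (incf cy)); rewrite fc -hc.
  exact: (incr_piece_le piece ax xc).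
- have xa : x < a.
    by rewrite ltNge; apply/negP => ax; apply: xout; rewrite ax (le_trans (ltW xy) yc).
  apply: lt_le_trans (incf xa) _; rewrite fa -{1}ha.
  exact: (incr_piece_le piece (lexx a) ay yc).
- exact: incf.
Qed.

Lemma patch_cancel : cancel f g -> cancel (patch a c h f) (patch a c k g).
Proof.
have [ha hc _ hK] := piece; move=> fK x; rewrite {2}/patch.
have [xin|/negP xout] := boolP (a <= x <= c).
  by rewrite patch_in ?hK // (incr_piece_mem piece).
rewrite /patch; case: ifP => [/andP[afx fxc]|_]; last exact: fK.
have [xa|ax] := ltP x a.
  by have := incf xa; rewrite fa => fxa; rewrite leNgt fxa in afx.
have cx : c < x by rewrite ltNge; apply/negP => xc; apply: xout; rewrite ax xc.
by have := incf cx; rewrite fc => cfx; rewrite leNgt cfx in fxc.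
Qed.
End Homeo.
End Patching.

Section Arcs.
Variable R : realType.
Implicit Types (u v y : R).

Lemma arc_SomeE u v y : u < v -> Defs.arc (Some u) (Some v) (Some y) <-> u <= y <= v.
Proof.
move=> uv; rewrite /Defs.arc /cbetween /=; split.
- case=> [[->]|[[->]|/or3P[]/andP[h1 h2]]]; apply/andP; split; lra.
- move=> /andP[uy yv]; case: (ltgtP u y) => [{}uy||<-]; [|lra|by left].
  by case: (ltgtP y v) => [{}yv|vy|->]; [right; right | lra | right; left].
Qed.

Lemma arc_Some_infty u v : u < v -> ~ Defs.arc (Some u) (Some v) infty.
Proof. by move=> uv; rewrite /Defs.arc /cbetween /= andbT orbF => -[|[|]] //; lra. Qed.

Lemma arc_wrapE u v y : u < v -> Defs.arc (Some v) (Some u) (Some y) <-> y <= u \/ v <= y.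
Proof.
move=> uv; rewrite /Defs.arc /cbetween /=; split.
- by case=> [[->]|[[->]|/or3P[]/andP[h1 h2]]]; [right | left | lra | right | left]; lra.
- case=> h.
  + case: (ltgtP y u) => [yu|uy|->]; [|lra|by right; left].
    by right; right; rewrite uv !orbT.
  + case: (ltgtP v y) => [vy|yv|->]; [|lra|by left].
    by right; right; rewrite uv orbT.
Qed.

Lemma arc_wrap_infty u v : u < v -> Defs.arc (Some v) (Some u) infty.
Proof. by move=> uv; right; right; rewrite /cbetween /= uv. Qed.
End Arcs.

Section RealMoebius.
Variable R : realType.
Variables A B C D : R.
Hypothesis det1 : A * D - B * C = 1.
Implicit Types (a c x y : R).

Definition mobR x := (A * x + B) / (C * x + D).

Definition mobR_inv x := (D * x - B) / (- C * x + A).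

Definition fixpoly x := C * x ^+ 2 + (D - A) * x - B.

Lemma mobR_sub x y : C * x + D != 0 -> C * y + D != 0 ->
  mobR y - mobR x = (y - x) / ((C * x + D) * (C * y + D)).
Proof.
move=> dx dy; rewrite -[y - x]mul1r -det1 /mobR; field.
by rewrite dx dy.
Qed.

Lemma mobR_fixed a : fixpoly a = 0 -> C * a + D != 0 -> mobR a = a.
Proof.
move=> fa da; rewrite /mobR.
have -> : A * a + B = a * (C * a + D) - fixpoly a by rewrite /fixpoly; ring.
by rewrite fa subr0 mulfK.
Qed.

Lemma mobRK x : C * x + D != 0 -> mobR_inv (mobR x) = x.
Proof.
move=> dx; rewrite /mobR_inv /mobR.
have -> : D * ((A * x + B) / (C * x + D)) - B = (A * D - B * C) * x / (C * x + D) by field.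
have -> : - C * ((A * x + B) / (C * x + D)) + A = (A * D - B * C) / (C * x + D) by field.
by rewrite det1 mul1r; field; rewrite dx.
Qed.

Lemma mobR_inv_den_fixed a : fixpoly a = 0 -> (- C * a + A) * (C * a + D) = 1.
Proof.
move=> fa; rewrite -det1 -[RHS]subr0 -[X in _ - X](mulr0 C) -fa /fixpoly; ring.
Qed.

Section Piece.
Variables a c : R.
Hypotheses (ac : a < c) (fa : fixpoly a = 0) (fc : fixpoly c = 0).
Hypothesis den_ac : 0 < (C * a + D) * (C * c + D).

(* [C x + D] is affine in [x], so it keeps the sign it has at both ends of [a, c]. *)
Lemma mobR_den_sign x : a <= x <= c -> 0 < (C * x + D) * (C * a + D).
Proof.
case/andP=> ax xc.
have da : C * a + D != 0 by apply: contraTneq den_ac => ->; rewrite mul0r ltxx.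
have sq : 0 < (C * a + D) ^+ 2 by rewrite exprn_even_gt0.
have : 0 < (c - x) * (C * a + D) ^+ 2 + (x - a) * ((C * a + D) * (C * c + D)).
  move: xc; rewrite le_eqVlt => /orP[/eqP->|xc].
    by rewrite subrr mul0r add0r mulr_gt0 // subr_gt0.
  have : 0 < (c - x) * (C * a + D) ^+ 2 by rewrite mulr_gt0 // subr_gt0.
  have : 0 <= (x - a) * ((C * a + D) * (C * c + D)) by rewrite mulr_ge0 ?subr_ge0 // ltW.
  lra.
have -> : (c - x) * (C * a + D) ^+ 2 + (x - a) * ((C * a + D) * (C * c + D)) =
    (c - a) * ((C * x + D) * (C * a + D)) by ring.
by rewrite pmulr_rgt0 // subr_gt0.
Qed.

Lemma mobR_den_neq0 x : a <= x <= c -> C * x + D != 0.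
Proof. by move/mobR_den_sign; apply: contraTneq => ->; rewrite mul0r ltxx. Qed.

Lemma mobR_incr_piece : incr_piece a c mobR mobR_inv.
Proof.
have aac : a <= a <= c by rewrite lexx ltW.
have cac : a <= c <= c by rewrite lexx ltW.
split; [exact/mobR_fixed/mobR_den_neq0 | exact/mobR_fixed/mobR_den_neq0 | |].
- move=> x y ax xy yc.
  have hx : a <= x <= c by rewrite ax (le_trans (ltW xy) yc).
  have hy : a <= y <= c by rewrite yc (le_trans ax (ltW xy)).
  rewrite -subr_gt0 mobR_sub ?mobR_den_neq0 // divr_gt0 ?subr_gt0 //.
  have := mulr_gt0 (mobR_den_sign hx) (mobR_den_sign hy).
  have -> : (C * x + D) * (C * a + D) * ((C * y + D) * (C * a + D)) =
    (C * x + D) * (C * y + D) * (C * a + D) ^+ 2 by ring.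
  by rewrite pmulr_lgt0 // exprn_even_gt0 // mobR_den_neq0.
- by move=> x /mobR_den_neq0; apply: mobRK.
Qed.
End Piece.
End RealMoebius.

Lemma mobR_inv_incr_piece (R : realType) (A B C D a c : R) :
  A * D - B * C = 1 -> a < c -> fixpoly A B C D a = 0 -> fixpoly A B C D c = 0 ->
  0 < (C * a + D) * (C * c + D) ->
  incr_piece a c (mobR_inv A B C D) (mobR A B C D).
Proof.
move=> det1 ac fa fc den_ac.
have det1' : D * A - (- B) * (- C) = 1 by rewrite -det1; ring.
have fixV x : fixpoly D (- B) (- C) A x = - fixpoly A B C D x by rewrite /fixpoly; ring.
have := @mobR_incr_piece _ _ _ _ _ det1' a c ac.
rewrite !fixV fa fc oppr0 => /(_ erefl erefl).
have -> : mobR_inv D (- B) (- C) A = mobR A B C D.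
  by apply/funext => x; rewrite /mobR_inv /mobR !opprK.
apply.
have prod1 : (- C * a + A) * (- C * c + A) * ((C * a + D) * (C * c + D)) = 1.
  rewrite -[RHS](mulr1 1) -{1}(mobR_inv_den_fixed det1 fa).
  by rewrite -(mobR_inv_den_fixed det1 fc); ring.
by rewrite -(pmulr_lgt0 _ den_ac) prod1 ltr01.
Qed.

Definition bump_map (R : realType) (a c c' b : R) (f1 f2 : R -> R) :=
  patch a c f1 (patch c' b f2 id).

Section Bump.
Variable R : realType.
Variables (a c c' b : R) (f1 f2 g1 g2 : R -> R).
Hypotheses (ac : a <= c) (cc' : c < c') (c'b : c' <= b).
Hypotheses (piece1 : incr_piece a c f1 g1) (piece2 : incr_piece c' b f2 g2).
Local Notation bump := (bump_map a c c' b).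

Let id_homo : {homo (@id R) : x y / x < y}. Proof. by []. Qed.

Let outer_fixed x : x <= c' -> patch c' b f2 id x = x.
Proof. by have [f2c' f2b _ _] := piece2; move=> xc'; apply: patch_out => //; left. Qed.

Lemma bump_homo : {homo bump f1 f2 : x y / x < y}.
Proof.
have [f2c' f2b _ _] := piece2.
apply: (patch_homo piece1).
- exact: (patch_homo piece2 id_homo).
- exact/outer_fixed/(le_trans ac (ltW cc')).
- exact/outer_fixed/ltW.
Qed.

Lemma bumpE_left x : a <= x <= c -> bump f1 f2 x = f1 x.
Proof. exact: patch_in. Qed.

Let bump_out x : x <= a \/ c <= x -> bump f1 f2 x = patch c' b f2 id x.
Proof.
have [f1a f1c _ _] := piece1; apply: patch_out.
- by rewrite outer_fixed // (le_trans ac (ltW cc')).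
- by rewrite outer_fixed // ltW.
Qed.

Lemma bumpE_right x : c' <= x <= b -> bump f1 f2 x = f2 x.
Proof.
case/andP=> c'x xb; rewrite bump_out ?patch_in ?c'x //.
by right; apply: ltW (lt_le_trans cc' c'x).
Qed.

Lemma bumpE_id x : [\/ x <= a, c <= x <= c' | b <= x] -> bump f1 f2 x = x.
Proof.
have [f2c' f2b _ _] := piece2.
case=> [xa | /andP[cx xc'] | bx].
- by rewrite bump_out ?outer_fixed //; [apply: le_trans xa (le_trans ac (ltW cc')) | left].
- by rewrite bump_out ?outer_fixed //; right.
- have cx : c <= x := le_trans (ltW (lt_le_trans cc' c'b)) bx.
  by rewrite bump_out ?patch_out //; right.
Qed.

Lemma bump_cancel :
  incr_piece a c g1 f1 -> incr_piece c' b g2 f2 -> cancel (bump g1 g2) (bump f1 f2).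
Proof.
move=> piece1' piece2'; have [g2c' g2b _ _] := piece2'.
have g_outer_fixed x : x <= c' -> patch c' b g2 id x = x.
  by move=> xc'; apply: patch_out => //; left.
apply: (patch_cancel piece1').
- exact: (patch_homo piece2' id_homo).
- exact/g_outer_fixed/(le_trans ac (ltW cc')).
- exact/g_outer_fixed/ltW.
- exact: (patch_cancel piece2' id_homo).
Qed.
End Bump.

Section IntegralPieces.
Variable R : realType.

Definition mobRM (M : mat2) : R -> R :=
  let: (a, b, c, d) := M in mobR a%:~R b%:~R c%:~R d%:~R.

Definition denM (M : mat2) (x : R) : R :=
  let: (a, b, c, d) := M in c%:~R * x + d%:~R.

Lemma mob_Some (M : mat2) (x : R) : denM M x != 0 -> mob M (Some x) = Some (mobRM M x).
Proof. by case: M => [[[a b] c] d] /= /negbTE->. Qed.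

Definition id2 : mat2 := (1, 0, 0, 1).

Lemma mob_id2 (q : P1 R) : mob id2 q = q.
Proof. by case: q => [x|] //=; rewrite mul0r add0r oner_eq0 mul1r addr0 divr1. Qed.

Definition sl2z_piece (a c : R) (M : mat2) :=
  [/\ in_SL2Z M, PZ (Some a), PZ (Some c),
      forall x, a <= x <= c -> denM M x != 0 &
      exists g, incr_piece a c (mobRM M) g /\ incr_piece a c g (mobRM M)].

Lemma bump_in_HZ (a c c' b : R) (M1 M2 : mat2) :
  a < c -> c < c' -> c' < b -> sl2z_piece a c M1 -> sl2z_piece c' b M2 ->
  in_HZ (omap (bump_map a c c' b (mobRM M1) (mobRM M2))).
Proof.
move=> ac cc' c'b [SL1 PZa PZc den1 [g1 [G1 G1']]] [SL2 PZc' PZb den2 [g2 [G2 G2']]].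
have ab : a < b by rewrite (lt_trans ac) // (lt_trans cc').
have bumpE_id' := bumpE_id (ltW ac) cc' (ltW c'b) G1 G2.
split=> //; split.
  apply: (omap_p1_homeo (g := bump_map a c c' b g1 g2)).
  - exact: bump_homo (ltW ac) cc' G1 G2.
  - exact: bump_cancel (ltW ac) cc' G1 G2.
  - exact: bump_cancel (ltW ac) cc' G1' G2'.
exists [:: (Some b, Some a, id2); (Some a, Some c, M1);
          (Some c, Some c', id2); (Some c', Some b, M2)]; split.
- move=> pc; rewrite !inE => /or4P[]/eqP->; split => //; move=> [y|] hy;
    rewrite ?mob_id2 //; move: hy => /= hy.
  + by rewrite bumpE_id' //; case/(arc_wrapE _ ab): hy; [constructor 1 | constructor 3].
  + by have yac := (arc_SomeE _ ac).1 hy; rewrite mob_Some ?den1 ?bumpE_left.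
  + by case: (arc_Some_infty ac).
  + by rewrite bumpE_id' //; constructor 2; apply/(arc_SomeE _ cc').
  + have yc'b := (arc_SomeE _ c'b).1 hy.
    by rewrite mob_Some ?den2 // (bumpE_right (ltW ac) cc' G1 G2).
  + by case: (arc_Some_infty c'b).
- case=> [y|]; last first.
    by exists (Some b, Some a, id2); rewrite ?inE ?eqxx //; apply: arc_wrap_infty.
  have [ya|ay] := lerP y a.
    exists (Some b, Some a, id2); rewrite ?inE ?eqxx //.
    by apply/(arc_wrapE _ ab); left.
  have [yc|cy] := lerP y c.
    exists (Some a, Some c, M1); rewrite ?inE ?eqxx ?orbT //.
    by apply/(arc_SomeE _ ac); rewrite yc ltW.
  have [yc'|c'y] := lerP y c'.
    exists (Some c, Some c', id2); rewrite ?inE ?eqxx ?orbT //.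
    by apply/(arc_SomeE _ cc'); rewrite yc' ltW.
  have [yb|by_] := lerP y b.
    exists (Some c', Some b, M2); rewrite ?inE ?eqxx ?orbT //.
    by apply/(arc_SomeE _ c'b); rewrite yb ltW.
  exists (Some b, Some a, id2); rewrite ?inE ?eqxx //.
  by apply/(arc_wrapE _ ab); right; apply: ltW.
Qed.
End IntegralPieces.

(* The Moebius map of [Kmat J N t] is the involution
   [x |-> x0 - 1 / (N^4 (x - x0))], with pole [x0 = J/N + 1/N^2], followed by
   the translation by [- (t + 2/N^2)]; see [mobR_Kmat]. *)
Definition Kmat (J N t : int) : mat2 :=
  (J * N - 1 - t * (N * N), t * (J * N + 1) - J * J, N * N, - (J * N + 1)).

Lemma Kmat_SL2Z J N t : in_SL2Z (Kmat J N t).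
Proof. rewrite /=; ring. Qed.

Lemma Kmat_hyperbolic J N t : (0 < t * (N * N) \/ t * (N * N) < -4)%R ->
  hyperbolic (Kmat J N t).
Proof.
rewrite /hyperbolic /Kmat.
have -> : J * N - 1 - t * (N * N) + - (J * N + 1) = - (2 + t * (N * N)) by ring.
by rewrite normrN; case: (ltP (-2) (t * (N * N))) => h [] h';
  [rewrite ger0_norm | rewrite ger0_norm | rewrite ltr0_norm | rewrite ltr0_norm]; lia.
Qed.

Section KmatPiece.
Variable R : realType.
Variables (J N t : int).
Let j : R := J%:~R.
Let n : R := N%:~R.
Let s : R := t%:~R.
Hypothesis n_gt0 : 0 < n.

Let A := j * n - 1 - s * (n * n).
Let B := s * (j * n + 1) - j * j.
Let C := n * n.
Let D := - (j * n + 1).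

Let mobRM_Kmat : mobRM (Kmat J N t) = mobR A B C D.
Proof. by rewrite /mobRM /Kmat /A /B /C /D !(intrD, intrM, intrN, intrB). Qed.

Let denM_Kmat x : denM (Kmat J N t) x = C * x + D.
Proof. by rewrite /denM /Kmat /C /D !(intrD, intrM, intrN, intrB). Qed.

Let n_neq0 : n != 0. Proof. by rewrite gt_eqF. Qed.

Lemma Kmat_den z : C * ((j + z) / n) + D = n * z - 1.
Proof. by rewrite /C /D; field. Qed.

Lemma Kmat_fixpoly z : fixpoly A B C D ((j + z) / n) = z ^+ 2 + s * n * z - s.
Proof. by rewrite /fixpoly /A /B /C /D; field. Qed.

Lemma mobR_Kmat x : C * x + D != 0 ->
  mobRM (Kmat J N t) x = j / n - (n * n)^-1 - s - ((n * n) * (C * x + D))^-1.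
Proof. by move=> dx; rewrite mobRM_Kmat /mobR /A /B /C /D; field; rewrite dx. Qed.

Section Roots.
Variables zm zp : R.
Hypotheses (zmp : zm < zp) (rm : zm ^+ 2 + s * n * zm - s = 0) (rp : zp ^+ 2 + s * n * zp - s = 0).
Hypothesis den_sign : 0 < (n * zm - 1) * (n * zp - 1).
Hypothesis hyp : hyperbolic (Kmat J N t).

Let root_in_PZ z : z ^+ 2 + s * n * z - s = 0 -> n * z - 1 != 0 -> PZ (Some ((j + z) / n)).
Proof.
move=> rz dz; exists (Kmat J N t); split => //; first exact: Kmat_SL2Z.
rewrite mob_Some ?denM_Kmat ?Kmat_den // mobRM_Kmat mobR_fixed ?Kmat_fixpoly ?Kmat_den //.
Qed.

Lemma Kmat_piece : sl2z_piece ((j + zm) / n) ((j + zp) / n) (Kmat J N t).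
Proof.
have ac : (j + zm) / n < (j + zp) / n by rewrite ltr_pM2r ?invr_gt0 // ltrD2l.
have det1 : A * D - B * C = 1 by rewrite /A /B /C /D; ring.
have fa : fixpoly A B C D ((j + zm) / n) = 0 by rewrite Kmat_fixpoly.
have fc : fixpoly A B C D ((j + zp) / n) = 0 by rewrite Kmat_fixpoly.
have den : 0 < (C * ((j + zm) / n) + D) * (C * ((j + zp) / n) + D) by rewrite !Kmat_den.
split; first exact: Kmat_SL2Z.
- by apply: root_in_PZ rm _; apply: contraTneq den_sign => ->; rewrite mul0r ltxx.
- by apply: root_in_PZ rp _; apply: contraTneq den_sign => ->; rewrite mulr0 ltxx.
- by move=> x /(mobR_den_neq0 ac den); rewrite denM_Kmat.
- exists (mobR_inv A B C D); rewrite mobRM_Kmat; split.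
  + exact: mobR_incr_piece.
  + exact: mobR_inv_incr_piece.
Qed.
End Roots.
End KmatPiece.

Section QuadraticRoots.
Variables (R : realType) (b c : R).
Hypothesis disc_gt0 : 0 < b ^+ 2 - 4 * c.

Definition qroot_lo := (- b - Num.sqrt (b ^+ 2 - 4 * c)) / 2.
Definition qroot_hi := (- b + Num.sqrt (b ^+ 2 - 4 * c)) / 2.

Let sqrt_sq : Num.sqrt (b ^+ 2 - 4 * c) ^+ 2 = b ^+ 2 - 4 * c.
Proof. by rewrite sqr_sqrtr // ltW. Qed.

Lemma qroot_loE : qroot_lo ^+ 2 + b * qroot_lo + c = 0.
Proof.
have -> : qroot_lo ^+ 2 + b * qroot_lo + c =
  (Num.sqrt (b ^+ 2 - 4 * c) ^+ 2 - (b ^+ 2 - 4 * c)) / 4 by rewrite /qroot_lo; field.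
by rewrite sqrt_sq subrr mul0r.
Qed.

Lemma qroot_hiE : qroot_hi ^+ 2 + b * qroot_hi + c = 0.
Proof.
have -> : qroot_hi ^+ 2 + b * qroot_hi + c =
  (Num.sqrt (b ^+ 2 - 4 * c) ^+ 2 - (b ^+ 2 - 4 * c)) / 4 by rewrite /qroot_hi; field.
by rewrite sqrt_sq subrr mul0r.
Qed.

Lemma qroot_lt : qroot_lo < qroot_hi.
Proof.
have := sqrtr_gt0 (b ^+ 2 - 4 * c); rewrite disc_gt0 => q_gt0.
by rewrite /qroot_lo /qroot_hi ltr_pM2r //; lra.
Qed.
End QuadraticRoots.

Section RootBounds.
Variable R : realType.

Let lt_sq (X Y : R) : 0 <= Y -> X ^+ 2 < Y ^+ 2 -> X < Y.
Proof. by move=> Y0 XY; case: (ltP X Y) => // YX; nra. Qed.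

Lemma left_qroots (n t : R) : 3 <= n -> 1 <= t ->
  let lo := qroot_lo (t * n) (- t) in let hi := qroot_hi (t * n) (- t) in
  [/\ 0 < (t * n) ^+ 2 - 4 * (- t), lo < - (t * n), 0 < hi, n * hi < 1 &
      0 < (n * lo - 1) * (n * hi - 1)].
Proof.
move=> n_ge3 t_ge1 /=; rewrite /qroot_lo /qroot_hi.
have disc : 0 < (t * n) ^+ 2 - 4 * (- t) by nra.
set q := Num.sqrt _; have q0 : 0 <= q by rewrite sqrtr_ge0.
have qq : q ^+ 2 = (t * n) ^+ 2 - 4 * (- t) by rewrite sqr_sqrtr // ltW.
have tn_q : t * n < q by apply: lt_sq => //; nra.
have nq : n * q < t * n ^+ 2 + 2 by apply: lt_sq; nra.
split => //; nra.
Qed.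

Lemma right_qroots (n s : R) : 3 <= n -> 4 <= s ->
  let lo := qroot_lo (- s * n) s in let hi := qroot_hi (- s * n) s in
  [/\ 0 < (- s * n) ^+ 2 - 4 * s, 1 < n * lo, n * lo < 2, s * n / 2 <= hi &
      0 < (n * lo - 1) * (n * hi - 1)].
Proof.
move=> n_ge3 s_ge4 /=; rewrite /qroot_lo /qroot_hi.
have n2 : 9 <= n ^+ 2 by nra.
have sn2 : 36 <= s * n ^+ 2 by nra.
have disc : 0 < (- s * n) ^+ 2 - 4 * s by nra.
set q := Num.sqrt _; have q0 : 0 <= q by rewrite sqrtr_ge0.
have qq : q ^+ 2 = (- s * n) ^+ 2 - 4 * s by rewrite sqr_sqrtr // ltW.
have nq_hi : n * q < s * n ^+ 2 - 2 by apply: lt_sq; nra.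
have nq_lo : s * n ^+ 2 - 4 < n * q by apply: lt_sq; nra.
split => //; nra.
Qed.
End RootBounds.

Section Escape.
Variables (R : realType) (p : R) (m : nat).

Let N : int := (m + 3)%N.
Let n : R := N%:~R.
Let J : int := Num.floor (n * p).
Let j : R := J%:~R.
Let d : R := m.+1%:R^-1.
Let K : nat := Num.Def.archi_bound `|p|.

Let nE : n = m%:R + 3. Proof. by rewrite /n /N -pmulrn natrD. Qed.
Let n_ge3 : 3 <= n. Proof. by rewrite nE; have := ler0n R m; lra. Qed.
Let n_gt0 : 0 < n. Proof. by have := n_ge3; lra. Qed.
Let j_le : j <= n * p. Proof. exact: floor_le. Qed.
Let j_gt : n * p < j + 1. Proof. by have := floorD1_gt (n * p); rewrite intrD. Qed.
Let nd_ge1 : 1 <= n * d.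
Proof. by rewrite /d nE ler_pdivlMr ?ltr0Sn // mul1r -natr1; have := ler0n R m; lra. Qed.
Let d_le1 : d <= 1. Proof. by rewrite /d invf_le1 ?ltr0Sn // ler1n. Qed.
Let p_bound : - K%:R < p < K%:R.
Proof. by rewrite -ltr_norml; apply: archi_boundP. Qed.

Let inv_den_le w : 1 <= w -> ((n * n) * w)^-1 <= (n * n)^-1.
Proof.
move=> w_ge1; have nn : 0 < n * n by rewrite mulr_gt0.
by rewrite lef_pV2 ?posrE ?mulr_gt0 ?ler_peMr //; lra.
Qed.

(* Both Moebius pieces used below have this common pole. *)
Let pole := (j + n^-1) / n.

Lemma escape_left : exists a c M, [/\ sl2z_piece a c M,
  a < p - d, p - d <= c, c < pole & mobRM M (p - d) < - m%:R].
Proof.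
(* [lra] ignores section-local facts, hence these copies. *)
have n0 := n_gt0; have jle := j_le; have jgt := j_gt; have nd1 := nd_ge1; have d1 := d_le1.
pose T : int := (K + m + 1)%N; pose t : R := T%:~R.
have tE : t = K%:R + m%:R + 1 by rewrite /t /T -pmulrn !natrD.
have t_ge1 : 1 <= t by rewrite tE; have := ler0n R K; have := ler0n R m; lra.
have [disc lo_lt hi_gt0 nhi_lt1 sgn] := left_qroots n_ge3 t_ge1.
have hyp : hyperbolic (Kmat J N T).
  by apply: Kmat_hyperbolic; left; rewrite /T /N -!PoszM ltz_nat !muln_gt0 addn1 addn3.
exists ((j + qroot_lo (t * n) (- t)) / n), ((j + qroot_hi (t * n) (- t)) / n), (Kmat J N T).
split.
- exact: (@Kmat_piece R J N T n_gt0 _ _ (qroot_lt disc)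
    (qroot_loE disc) (qroot_hiE disc) sgn hyp).
- rewrite ltr_pdivrMr //; have : d * n <= t * n by rewrite ler_pM2r //; lra.
  lra.
- by rewrite ler_pdivlMr //; lra.
- by rewrite /pole ltr_pM2r ?invr_gt0 // ltrD2l -(ltr_pM2l n_gt0) divff ?gt_eqF.
have w_le : (n * n) * (p - d) + - (j * n + 1) <= -1.
  have : n * (n * p) <= n * (j + 1) by rewrite ler_pM2l // ltW.
  have : n <= n * (n * d) by rewrite ler_peMr // ltW.
  have -> : (n * n) * (p - d) + - (j * n + 1) = n * (n * p) - n * (n * d) - j * n - 1 by ring.
  lra.
rewrite mobR_Kmat //; last by apply: ltr0_neq0; lra.
have -> : ((n * n) * ((n * n) * (p - d) + - (j * n + 1)))^-1 =
  - ((n * n) * - ((n * n) * (p - d) + - (j * n + 1)))^-1 by rewrite mulrN invrN opprK.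
have w_ge : 1 <= - ((n * n) * (p - d) + - (j * n + 1)) by lra.
have := inv_den_le w_ge.
have : j / n <= p by rewrite ler_pdivrMr // mulrC.
case/andP: p_bound => _ pK; rewrite /t in tE; lra.
Qed.

Lemma escape_right : exists c' b M, [/\ sl2z_piece c' b M,
  pole < c', c' <= p + d, p + d < b & m%:R < mobRM M (p + d)].
Proof.
have n3 := n_ge3; have jle := j_le; have jgt := j_gt; have nd1 := nd_ge1; have d1 := d_le1.
have n0 : 0 < n by lra.
pose S : int := (K + m + 4)%N; pose s : R := S%:~R.
have sE : s = K%:R + m%:R + 4 by rewrite /s /S -pmulrn !natrD.
have s_ge4 : 4 <= s by rewrite sE; have := ler0n R K; have := ler0n R m; lra.
have [disc nlo_gt1 nlo_lt2 hi_ge sgn] := right_qroots n3 s_ge4.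
have hyp : hyperbolic (Kmat J N (- S)).
  apply: Kmat_hyperbolic; right; rewrite mulNr ltrN2 /S /N -!PoszM ltz_nat.
  by rewrite (@leq_trans (1 * (3 * 3))) // leq_mul ?addn4 // leq_mul ?leq_addl.
have piece := @Kmat_piece R J N (- S) n_gt0 _ _ (qroot_lt disc).
rewrite intrN -/s opprK in piece.
exists ((j + qroot_lo (- s * n) s) / n), ((j + qroot_hi (- s * n) s) / n), (Kmat J N (- S)).
split.
- exact: piece (qroot_loE disc) (qroot_hiE disc) sgn hyp.
- by rewrite /pole ltr_pM2r ?invr_gt0 // ltrD2l -(ltr_pM2l n_gt0) divff ?gt_eqF.
- rewrite ler_pdivrMr //.
  have : n <= n * (n * d) by rewrite ler_peMr // ltW.
  have : qroot_lo (- s * n) s < n * d.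
    by rewrite -(ltr_pM2l n0); apply: lt_le_trans nlo_lt2 _; nra.
  lra.
- rewrite ltr_pdivlMr //.
  have : 4 * n <= s * n by rewrite ler_pM2r //; lra.
  have : d * n <= n by rewrite ler_piMl //; lra.
  lra.
have w_ge : 1 <= (n * n) * (p + d) + - (j * n + 1).
  have : n * j <= n * (n * p) by rewrite ler_pM2l.
  have : n <= n * (n * d) by rewrite ler_peMr // ltW.
  have -> : (n * n) * (p + d) + - (j * n + 1) = n * (n * p) + n * (n * d) - j * n - 1 by ring.
  lra.
rewrite mobR_Kmat //; last by apply: lt0r_neq0; lra.
have := inv_den_le w_ge.
have : n^-1 <= 3^-1 by rewrite lef_pV2 ?posrE //; lra.
have : (n * n)^-1 <= 9^-1.
  by rewrite lef_pV2 ?posrE ?mulr_gt0 //; nra.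
have : p - n^-1 < j / n.
  by rewrite ltr_pdivlMr // mulrBl mulVf ?gt_eqF //; lra.
case/andP: p_bound => Kp _; rewrite intrN; lra.
Qed.

Lemma escape_map :
  exists phi : R -> R, in_HZ (omap phi) /\ forall y, d <= `|y - p| -> m%:R < `|phi y|.
Proof.
have [a [c [M1 [piece1 ad dc cpole f1d]]]] := escape_left.
have [c' [b [M2 [piece2 polec' c'd db f2d]]]] := escape_right.
have ac : a < c by apply: lt_le_trans ad dc.
have cc' : c < c' by apply: lt_trans cpole polec'.
have c'b : c' < b by apply: le_lt_trans c'd db.
pose phi := bump_map a c c' b (mobRM M1) (mobRM M2).
exists phi; split; first exact: (bump_in_HZ ac cc' c'b piece1 piece2).
have [_ _ _ _ [g1 [G1 _]]] := piece1; have [_ _ _ _ [g2 [G2 _]]] := piece2.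
have phi_le := le_mono (bump_homo (ltW ac) cc' G1 G2).
have phi_left : phi (p - d) = mobRM M1 (p - d) by rewrite /phi bumpE_left ?dc ?ltW.
have phi_right : phi (p + d) = mobRM M2 (p + d).
  by rewrite /phi (bumpE_right (ltW ac) cc' G1 G2) ?c'd ?ltW.
move=> y; have [yp|yp] := ltP (y - p) 0.
- rewrite ltr0_norm // => ydp.
  have : phi y <= phi (p - d) by rewrite phi_le; lra.
  have := ler_norm (- phi y); rewrite normrN; lra.
- rewrite ger0_norm // => ydp.
  have : phi (p + d) <= phi y by rewrite phi_le; lra.
  have := ler_norm (phi y); lra.
Qed.
End Escape.

Theorem lemma2 (R : realType) (p : R) :
  exists g : nat -> P1 R -> P1 R,
    (forall n, in_HZ (g n)) /\ unif_to_infty_away (Some p) g.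
Proof.
have [phi escape] := choice (escape_map p).
exists (fun n => omap (phi n)); split=> [n|]; first by case: (escape n).
move=> K cK Kp U [_ Uinf] Uoo.
have [e e_gt0 Ke] := p1_compact_dist_gt0 cK Kp.
have [M HM] := Uinf Uoo.
have archi_lt (x : R) k : 0 <= x -> (Num.Def.archi_bound x <= k)%N -> x < k%:R.
  by move=> x0 xk; apply: lt_le_trans (archi_boundP x0) _; rewrite ler_nat.
exists (maxn (Num.Def.archi_bound e^-1) (Num.Def.archi_bound `|M|)) => n.
rewrite geq_max => /andP[ne nM] [y Ky|] //=; apply: HM.
have Mn : `|M| < n%:R by apply: archi_lt.
have : n%:R < `|phi n y|.
  apply: (escape n).2; apply: le_trans (Ke _ Ky).
  rewrite -[e]invrK lef_pV2 ?posrE ?invr_gt0 ?ltr0Sn //.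
  by apply/ltW/archi_lt; rewrite ?invr_ge0 ?ltW // (leq_trans ne).
have := ler_norm M; lra.
Qed.
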